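(* (i) For a first countable topological space $(X,\tau)$ the following are equivalent: (1) $X$ is Hausdorff; (2) $X$ is a kd-space; (3) $X$ is a kc-space; (4) $X$ is a US-space. (ii) A semi-regular topological space $(X,\tau)$ is a kd-space if and only if it is a kc-space.
   Context: $X$ is a kc-space if every compact subset of $X$ is closed; $X$ is a kd-space if every compact subset of $X$ is $\delta$-closed, where $A$ is $\delta$-closed if every point $x$ such that $A\cap U\ne\emptyset$ for all regular open $U\ni x$ (regular open meaning $U=\mathrm{Int}(\mathrm{Cl}(U))$) belongs to $A$. $X$ is a US-space (unique sequence space) if every convergent sequence has a unique limit. $X$ is semi-regular if the regular open sets form a base for $\tau$. *)

From mathcomp Require Import all_boot all_order all_algebra.
From mathcomp Require Import all_classical all_reals all_analysis.
Set Implicit Arguments. Unset Strict Implicit. Unset Printing Implicit Defensive.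
Local Open Scope classical_set_scope.

Section Defs.
Variable T : topologicalType.

Definition regular_open (U : set T) : Prop := U = interior (closure U).

Definition delta_closed (A : set T) : Prop :=
  forall x : T, (forall U : set T, regular_open U -> U x -> A `&` U !=set0) -> A x.

Definition kc_space : Prop := forall A : set T, compact A -> closed A.

Definition kd_space : Prop := forall A : set T, compact A -> delta_closed A.

Definition us_space : Prop :=
  forall (u : nat -> T) (x y : T), u @ \oo --> x -> u @ \oo --> y -> x = y.

Definition first_countable : Prop :=
  forall x : T, exists B : set (set T),
    [/\ countable B, (forall b, B b -> nbhs x b) &
        (forall U, nbhs x U -> exists2 b, B b & b `<=` U)].

Definition semi_regular : Prop :=
  forall (U : set T) (x : T), open U -> U x ->
    exists V : set T, [/\ regular_open V, V x & V `<=` U].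
End Defs.

From mathcomp Require Import all_boot all_order all_algebra.
From mathcomp Require Import all_classical all_reals all_analysis.
Set Implicit Arguments. Unset Strict Implicit. Unset Printing Implicit Defensive.
Local Open Scope classical_set_scope.

(* Regular open sets are open, so delta-closed sets are closed and kd implies
   kc; when the regular open sets form a base, closed sets are delta-closed.

   Hausdorff implies kd: if every Int Cl V, with V a neighbourhood of x, meets
   the compact set K, their traces on K generate a proper filter, whose cluster
   point k in K cannot be separated from x, because a point of Int Cl A close
   to k lies in the closure of A.

   kc implies US: if u tends to x and to y <> x, the set {x} u {u n | u n <> y}
   is compact (a filter not clustering at x contains a set missing all but
   finitely many terms), hence closed; as {y} is closed it eventually contains
   the sequence, so it contains y, which is absurd.

   US implies Hausdorff for first countable spaces: if x and y cannot be
   separated, picking u n in the n-th members of decreasing neighbourhood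
   bases of both points gives a sequence converging to x and to y. *)

Section kc_kd_spaces.
Variable T : topologicalType.

Lemma regular_open_interior_closure (A : set T) : regular_open (closure A)°.
Proof. exact/esym/interior_closure_idem. Qed.

Lemma regular_open_open (U : set T) : regular_open U -> open U.
Proof. by move=> ->; exact: open_interior. Qed.

Lemma delta_closed_closed (A : set T) : delta_closed A -> closed A.
Proof.
move=> dA x clAx; apply: dA => U /regular_open_open oU Ux.
exact/clAx/open_nbhs_nbhs.
Qed.

Lemma closed_delta_closed (A : set T) :
  semi_regular T -> closed A -> delta_closed A.
Proof.
move=> srT cA x dAx; apply: contrapT => nAx.
have [V [rV Vx VnA]] := srT _ x (closed_openC cA) nAx.
by have [z [Az /VnA]] := dAx V rV Vx.
Qed.

Lemma kd_kc_space : kd_space T -> kc_space T.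
Proof. by move=> kdT A /kdT /delta_closed_closed. Qed.

Lemma kc_kd_space : semi_regular T -> kc_space T -> kd_space T.
Proof. by move=> srT kcT A /kcT; exact: closed_delta_closed. Qed.

Lemma hausdorff_kd_space : hausdorff_space T -> kd_space T.
Proof.
move=> hT K cK x dKx.
pose F := filter_from (nbhs x) (fun V => K `&` (closure V)°).
have FF : Filter F.
  apply: filter_from_filter; first by exists setT; exact: filterT.
  move=> V W xV xW; exists (V `&` W); first exact: filterI.
  by move=> z [Kz VWz]; split; split => //; move: VWz;
    apply: interiorS; apply: closureS => ? [].
have PF : ProperFilter F.
  apply: filter_from_proper => V xV.
  apply: dKx; first exact: regular_open_interior_closure.
  exact: filterS (@subset_closure _ V) xV.
have [k [Kk clFk]] : exists k, K k /\ cluster F k.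
  by apply: cK; exists setT; [exact: filterT | exact: subIsetl].
rewrite (hT x k) // => A B xA kB.
have FA : F (K `&` (closure A)°) by exists A.
have [z [[_ /interior_subset clAz] zB]] := clFk _ _ FA (nbhs_interior kB).
exact: clAz.
Qed.

Lemma cvg_image_compact (u : nat -> T) (x : T) (A : set nat) :
  u @ \oo --> x -> compact ([set x] `|` u @` A).
Proof.
move=> ux F PF FS; have [clFx|] := pselect (cluster F x).
  by exists x; split => //; left.
move=> /existsNP[C /existsNP[B /not_implyP[FC /not_implyP[xB]]]].
move=> /nonemptyPn CB0.
have notCB z : C z -> ~ B z.
  by move=> Cz Bz; have : (C `&` B) z by []; rewrite CB0.
have [M _ uB] := ux B xB.
have FSC : F (([set x] `|` u @` A) `&` C) by exact: filterI.
have finSC : finite_set (([set x] `|` u @` A) `&` C).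
  apply: (@sub_finite_set _ _ (u @` `I_M)); last exact/finite_image/finite_II.
  move=> _ [[->|[n _ <-]] /notCB nBz]; first by have := nbhs_singleton xB.
  by exists n => //=; rewrite ltnNge; apply/negP => /uB.
have [z [[Sz _] clFz]] := finite_compact finSC PF FSC.
by exists z.
Qed.

Lemma kc_us_space : kc_space T -> us_space T.
Proof.
move=> kcT u x y ux uy; apply: contrapT => xy.
have closed_y : closed [set y] := kcT _ (@compact_set1 _ y).
have x_ny : nbhs x (~` [set y]).
  by apply: open_nbhs_nbhs; split; [exact: closed_openC | exact: xy].
pose S := [set x] `|` u @` [set n | u n <> y].
have closedS : closed S by apply: kcT; exact: cvg_image_compact.
have u_ny : \forall n \near \oo, u n <> y := ux _ x_ny.
have Su : \forall n \near \oo, S (u n).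
  by apply: filterS u_ny => n; right; exists n.
by case: (closed_cvg S closedS Su y uy) => [/esym|[n]].
Qed.

Lemma first_countable_nbhs_enum (x : T) : first_countable T ->
  exists2 f : nat -> set T, (forall n, nbhs x (f n)) &
    (forall U, nbhs x U -> exists N, f N `<=` U).
Proof.
move=> /(_ x)[B [/pfcard_geP[B0|/unsquash f] Bx Bbase]].
  by have [b] := Bbase _ filterT; rewrite B0.
exists f => [n|U /Bbase[b /(@surj _ _ _ _ f)[N _ <-] fNU]]; last by exists N.
exact/Bx/funS.
Qed.

Lemma first_countable_cvg_base (x : T) : first_countable T ->
  exists e : nat -> set T, (forall n, nbhs x (e n)) /\
    (forall u : nat -> T, (forall n, e n (u n)) -> u @ \oo --> x).
Proof.
move=> /(first_countable_nbhs_enum x)[f xf fbase].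
exists (fun n => [set z | forall i : 'I_n.+1, f i z]); split.
  by move=> n; apply: filter_forall => i; exact: xf.
move=> u fu U /fbase[N fNU]; exists N => // n /= Nn.
exact/fNU/(fu n (Ordinal (Nn : N < n.+1))).
Qed.

Lemma first_countable_us_hausdorff :
  first_countable T -> us_space T -> hausdorff_space T.
Proof.
move=> fcT usT x y clxy.
have [ex [xex cvg_ex]] := first_countable_cvg_base x fcT.
have [ey [yey cvg_ey]] := first_countable_cvg_base y fcT.
have /choice[u exy_u] : forall n, exists z, ex n z /\ ey n z.
  by move=> n; exact: clxy _ _ (xex n) (yey n).
by apply: (usT u); [apply: cvg_ex | apply: cvg_ey] => n; case: (exy_u n).
Qed.

End kc_kd_spaces.

Theorem mainTheorem4 :
  (forall T : topologicalType, first_countable T ->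
     [/\ hausdorff_space T <-> kd_space T,
         kd_space T <-> kc_space T &
         kc_space T <-> us_space T]) /\
  (forall T : topologicalType, semi_regular T ->
     (kd_space T <-> kc_space T)).
Proof.
split=> T; last by move=> srT; split; [exact: kd_kc_space | exact: kc_kd_space].
move=> fcT.
have hkd := @hausdorff_kd_space T; have kdkc := @kd_kc_space T.
have kcus := @kc_us_space T; have ush := first_countable_us_hausdorff fcT.
by split; split; tauto.
Qed.
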